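(* Consider the single-input control-affine system $\dot{x} = f(x) + g(x)u$ and a Lipschitz continuous exponential CBF $h$ with relative degree $r<n$ and rates $\gamma_1,\dots,\gamma_r>0$, $\gamma_{\min}=\min_i\gamma_i$, written in cascading constraint coordinates as $\dot{\varphi} = A_\gamma \varphi + B\mu$, $\dot{\eta} = q_{\mathrm{cbf}}(\eta,\varphi)$, where $l_\varphi$ denotes the Lipschitz constant of $q_{\mathrm{cbf}}$ with respect to $\varphi$. Let $x_0\in S_\varphi$. Suppose the positive-feedback-stabilizable global exponential minimum phase condition holds: there is a Lipschitz feedback $\kappa_{\mathrm{ps}}:\mathbb{R}^{n-r}\to\mathbb{R}_{\ge0}$ such that $\dot\eta=q_{\mathrm{cbf}}(\eta,\Gamma\kappa_{\mathrm{ps}}(\eta))$ has a globally exponentially stable equilibrium $\eta_e$. Let $V$ be a (converse) Lyapunov function with constants $\alpha_1,\alpha_2,\alpha_3,\alpha_4>0$ such that $\alpha_1|\eta-\eta_e|^2\le V(\eta)\le\alpha_2|\eta-\eta_e|^2$, $|\partial V/\partial\eta|\le\alpha_3|\eta-\eta_e|$, and $\frac{\partial V}{\partial\eta}\cdot q_{\mathrm{cbf}}(\eta,\Gamma\kappa_{\mathrm{ps}}(\eta))\le-\alpha_4|\eta-\eta_e|^2$. If $\alpha_4>\left(\frac{\alpha_3 l_\varphi}{2}\right)^2$ and $\gamma_{\min}$ is large enough, then the system under the barrier constraint can stay bounded; in particular, setting $\mu(t)=\kappa_{\mathrm{ps}}(\eta(t))$ (which satisfies $\mu\ge0$), the trajectory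 satisfies $(\varphi(t),\eta(t))\to(\Gamma\kappa_{\mathrm{ps}}(\eta_e),\eta_e)$ and thus stays bounded.
   Context: The system $\dot x = f(x)+g(x)u$ has $f,g:\mathbb{R}^n\to\mathbb{R}^n$ Lipschitz and $u\in\mathbb{R}$. $L_f$, $L_g$ denote Lie derivatives. $h$ has relative degree $r$ at $x$ if $L_gL_f^k h\equiv 0$ near $x$ for $k=0,\dots,r-2$ and $L_gL_f^{r-1}h(x)\neq 0$. An exponential CBF with relative degree $r$ is $h:\mathbb{R}^n\to\mathbb{R}$ with relative degree $r$ on $\mathcal{C}=\{h\ge 0\}$, $\partial h/\partial x\neq0$ on $\{h=0\}$, and $\sup_{u}[L_f^r h(x)+L_gL_f^{r-1}h(x)u+k^\top\xi(x)]\ge 0$ on $\mathcal{C}$, where $\xi=[h,L_fh,\dots,L_f^{r-1}h]^\top$ and $s^r+k_rs^{r-1}+\dots+k_1=(s+\gamma_1)\cdots(s+\gamma_r)$, $\gamma_i>0$. Virtual control input: $\mu(x,u)=L_f^rh+L_gL_f^{r-1}h\,u+k^\top\xi$; barrier constraint: $\mu\ge0$. Cascading constraint vector: $\varphi_1=h$, $\varphi_{i+1}=\dot\varphi_i+\gamma_i\varphi_i$; $S_\varphi=\{x:\varphi(x)\in\mathbb{R}^r_{\ge0}\}$. $A_\gamma$ is the $r\times r$ upper bidiagonal matrix with diagonal $-\gamma_1,\dots,-\gamma_r$ and superdiagonal entries $1$; $B=[0,\dots,0,1]^\top$; $\Gamma=-A_\gamma^{-1}B=[(\gamma_1\cdots\gamma_r)^{-1},(\gamma_2\cdots\gamma_r)^{-1},\dots,\gamma_r^{-1}]^\top$.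 The internal state $\eta\in\mathbb{R}^{n-r}$ is chosen so that $x\mapsto(\varphi,\eta)$ is a diffeomorphism and $L_g\eta_j\equiv 0$; then $\dot\varphi=A_\gamma\varphi+B\mu$, $\dot\eta=q_{\mathrm{cbf}}(\eta,\varphi)$ with $q_{\mathrm{cbf}}$ Lipschitz in $\eta$ and $\varphi$. Any signal $\mu(t)$ can be realized by a choice of $u$. *)

From HB Require Import structures.
From mathcomp Require Import all_boot all_order all_algebra.
From mathcomp Require Import all_classical all_reals all_analysis.
Set Implicit Arguments. Unset Strict Implicit. Unset Printing Implicit Defensive.
Import Order.TTheory GRing.Theory Num.Theory.
Import numFieldNormedType.Exports.
Local Open Scope ring_scope.

Definition edot (R : realType) (k : nat) (u v : 'cV[R]_k) : R :=
  \sum_(i < k) u i 0 * v i 0.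
Definition enorm (R : realType) (k : nat) (v : 'cV[R]_k) : R :=
  Num.sqrt (\sum_(i < k) v i 0 ^+ 2).

Definition Agam (R : realType) (r : nat) (gam : 'I_r -> R) : 'M[R]_r :=
  \matrix_(i < r, j < r)
    (if i == j then - gam i else if j == i.+1 :> nat then 1 else 0).
Definition Bvec (R : realType) (r : nat) : 'cV[R]_r :=
  \col_(i < r) (if i == r.-1 :> nat then 1 else 0).
Definition Gam (R : realType) (r : nat) (gam : 'I_r -> R) : 'cV[R]_r :=
  - (invmx (Agam gam) *m Bvec R r).

From HB Require Import structures.
From mathcomp Require Import all_boot all_order all_algebra.
From mathcomp Require Import all_classical all_reals all_analysis.
From mathcomp.algebra_tactics Require Import ring lra.
Import Order.TTheory GRing.Theory Num.Theory.
Import numFieldNormedType.Exports.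
Local Open Scope classical_set_scope.
Local Open Scope ring_scope.
Set Implicit Arguments. Unset Strict Implicit. Unset Printing Implicit Defensive.

(* Shift to [psi := phi - kap eta_e *: Gam] and take [W := V eta + |psi|^2].
   Along the closed loop, [A_gam] contributes at most [-(gam_min - 1) |psi|^2]
   and [|Gam| <= 1 / (gam_min - 1)], so once [gam_min] is beyond an explicit
   threshold every cross term in [W'] is absorbed and [W' <= - eps W].  Hence
   [(1 + eps t) W t <= W 0], which gives both convergence and boundedness. *)

Section EuclideanNorm.
Variables (R : realType) (k : nat).
Implicit Types (u v w : 'cV[R]_k) (c : R).

Lemma sumsq_ge0 v : 0 <= \sum_(i < k) v i 0 ^+ 2.
Proof. by apply: sumr_ge0 => i _; exact: sqr_ge0. Qed.

Lemma enorm_ge0 v : 0 <= enorm v.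
Proof. exact: sqrtr_ge0. Qed.

Lemma enorm_sqr v : enorm v ^+ 2 = \sum_(i < k) v i 0 ^+ 2.
Proof. by rewrite sqr_sqrtr // sumsq_ge0. Qed.

Lemma edotvv v : edot v v = enorm v ^+ 2.
Proof. by rewrite enorm_sqr; apply: eq_bigr => i _; rewrite expr2. Qed.

Lemma edotC u v : edot u v = edot v u.
Proof. by apply: eq_bigr => i _; rewrite mulrC. Qed.

Lemma edotDr u v w : edot u (v + w) = edot u v + edot u w.
Proof. by rewrite /edot -big_split; apply: eq_bigr => i _; rewrite mxE mulrDr. Qed.

Lemma edotDl u v w : edot (u + v) w = edot u w + edot v w.
Proof. by rewrite edotC edotDr !(edotC w). Qed.

Lemma edotZr c u v : edot u (c *: v) = c * edot u v.
Proof. by rewrite /edot mulr_sumr; apply: eq_bigr => i _; rewrite mxE mulrCA. Qed.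

Lemma edotNl u v : edot (- u) v = - edot u v.
Proof. by rewrite /edot -sumrN; apply: eq_bigr => i _; rewrite mxE mulNr. Qed.

Lemma enormZ c v : enorm (c *: v) = `|c| * enorm v.
Proof.
rewrite /enorm -sqrtr_sqr -sqrtrM ?sqr_ge0 // mulr_sumr; congr Num.sqrt.
by apply: eq_bigr => i _; rewrite mxE exprMn.
Qed.

Lemma enormN v : enorm (- v) = enorm v.
Proof. by rewrite -scaleN1r enormZ normrN normr1 mul1r. Qed.

Lemma edot_le_sqr u v : 2 * edot u v <= enorm u ^+ 2 + enorm v ^+ 2.
Proof.
rewrite !enorm_sqr /edot mulr_sumr -big_split; apply: ler_sum => i _ /=.
have := sqr_ge0 (u i 0 - v i 0); nra.
Qed.

Lemma enorm_eq0 v : enorm v = 0 -> v = 0.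
Proof.
move=> v0; apply/matrixP => i j; rewrite (ord1 j) mxE; apply/eqP.
have /eqP : enorm v ^+ 2 = 0 by rewrite v0 expr0n.
rewrite enorm_sqr psumr_eq0 => [/allP /(_ i (mem_index_enum _))|j' _].
  by rewrite sqrf_eq0.
exact: sqr_ge0.
Qed.

Lemma edot0l v : edot 0 v = 0.
Proof. by rewrite /edot big1 // => i _; rewrite mxE mul0r. Qed.

(* Cauchy-Schwarz, from AM-GM applied to [|v| u] and [|u| v]. *)
Lemma edot_le_enormM u v : edot u v <= enorm u * enorm v.
Proof.
have [/enorm_eq0 ->|u_neq0] := eqVneq (enorm u) 0.
  by rewrite edot0l mulr_ge0 ?enorm_ge0.
have [/enorm_eq0 ->|v_neq0] := eqVneq (enorm v) 0.
  by rewrite edotC edot0l mulr_ge0 ?enorm_ge0.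
have uv_gt0 : 0 < enorm u * enorm v.
  by rewrite mulr_gt0 // lt_def ?u_neq0 ?v_neq0 enorm_ge0.
have := edot_le_sqr (enorm v *: u) (enorm u *: v).
rewrite !enormZ edotZr edotC edotZr edotC !ger0_norm ?enorm_ge0 // => amgm.
by rewrite -(ler_pM2l uv_gt0); nra.
Qed.

Lemma ler_norm_edot u v : `|edot u v| <= enorm u * enorm v.
Proof.
rewrite ler_norml edot_le_enormM andbT lerNl -edotNl -(enormN u).
exact: edot_le_enormM.
Qed.

Lemma enormD u v : enorm (u + v) <= enorm u + enorm v.
Proof.
rewrite -ler_sqr ?nnegrE ?addr_ge0 ?enorm_ge0 //.
rewrite -edotvv edotDl !edotDr !edotvv [edot v u]edotC.
have := edot_le_enormM u v; nra.
Qed.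

Lemma enorm_coord_le v i : `|v i 0| <= enorm v.
Proof.
rewrite -sqrtr_sqr ler_sqrt ?sumsq_ge0 // (bigD1 i) //= lerDl.
by apply: sumr_ge0 => j _; exact: sqr_ge0.
Qed.

Lemma mx_norm_le_enorm v : `|v| <= enorm v.
Proof.
rewrite [leLHS]/Num.Def.normr /= mx_normrE.
apply: bigmax_le => [|[i j] _]; first exact: enorm_ge0.
by rewrite /= (ord1 j); exact: enorm_coord_le.
Qed.

Lemma continuous_enorm_sqr (c : 'cV[R]_k) :
  continuous (fun v : 'cV[R]_k => enorm (v - c) ^+ 2).
Proof.
move=> v; apply: differentiable_continuous.
have -> : (fun v : 'cV[R]_k => enorm (v - c) ^+ 2) =
    \sum_(i < k) ((fun v : 'cV[R]_k => v i 0) \- cst (c i 0)) ^+ 2.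
  by apply/funext => w; rewrite fct_sumE enorm_sqr; apply: eq_bigr => i _; rewrite !mxE.
apply: differentiable_sum => i; apply/differentiableX/differentiableB.
  exact: differentiable_coord.
exact: differentiable_cst.
Qed.

End EuclideanNorm.

Section CascadeMatrix.
Variables (R : realType) (r : nat) (gam : 'I_r -> R).

Lemma sum_if_eq (i : 'I_r) (c : R) : \sum_(j < r) (if i == j then c else 0) = c.
Proof.
rewrite (bigD1 i) //= eqxx big1 ?addr0 // => j /negbTE.
by rewrite eq_sym => ->.
Qed.

Lemma sum_if_le (P : pred 'I_r) (c : R) : 0 <= c ->
  (forall i j, P i -> P j -> i = j) -> \sum_(j < r) (if P j then c else 0) <= c.
Proof.
move=> c_ge0 P_le1; case: (pickP P) => [i Pi|P0]; last by rewrite big1 // => j _; rewrite P0.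
rewrite (bigD1 i) //= Pi big1 ?addr0 // => j ji.
by case: ifP => // Pj; move: ji; rewrite (P_le1 _ _ Pj Pi) eqxx.
Qed.

Lemma superdiag_quad_le (x : 'cV[R]_r) :
  \sum_(i < r) \sum_(j < r) (if j == i.+1 :> nat then x i 0 * x j 0 else 0) <= enorm x ^+ 2.
Proof.
have half_sqr_ge0 (i : 'I_r) : 0 <= x i 0 ^+ 2 / 2 by rewrite divr_ge0 ?sqr_ge0.
have left_le : \sum_(i < r) \sum_(j < r) (if j == i.+1 :> nat then x i 0 ^+ 2 / 2 else 0)
    <= \sum_(i < r) x i 0 ^+ 2 / 2.
  apply: ler_sum => i _; apply: sum_if_le => // a b /eqP ha /eqP hb.
  by apply: val_inj; rewrite /= ha hb.
have right_le : \sum_(i < r) \sum_(j < r) (if j == i.+1 :> nat then x j 0 ^+ 2 / 2 else 0)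
    <= \sum_(j < r) x j 0 ^+ 2 / 2.
  rewrite exchange_big; apply: ler_sum => j _ /=.
  apply: (@sum_if_le (fun i : 'I_r => j == i.+1 :> nat)) => // a b /eqP ha /eqP hb.
  by apply: val_inj; apply/eqP; rewrite -eqSS -ha hb.
have half : \sum_(i < r) x i 0 ^+ 2 / 2 = enorm x ^+ 2 / 2 by rewrite enorm_sqr mulr_suml.
apply: le_trans (_ : \sum_(i < r) \sum_(j < r) ((if j == i.+1 :> nat then x i 0 ^+ 2 / 2 else 0)
    + (if j == i.+1 :> nat then x j 0 ^+ 2 / 2 else 0)) <= _).
  apply: ler_sum => i _; apply: ler_sum => j _; case: ifP => _; last by rewrite addr0.
  have := sqr_ge0 (x i 0 - x j 0); nra.
under eq_bigr do rewrite big_split /=.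
rewrite big_split /=; move: left_le right_le; rewrite half; lra.
Qed.

Lemma Agam_quad_le (g0 : R) (x : 'cV[R]_r) : (forall i, g0 <= gam i) ->
  edot x (Agam gam *m x) <= - (g0 - 1) * enorm x ^+ 2.
Proof.
move=> gam_ge.
have -> : edot x (Agam gam *m x) = \sum_(i < r) - gam i * x i 0 ^+ 2
    + \sum_(i < r) \sum_(j < r) (if j == i.+1 :> nat then x i 0 * x j 0 else 0).
  rewrite -big_split; apply: eq_bigr => i _ /=; rewrite mxE mulr_sumr.
  rewrite -[X in X + _](sum_if_eq i) -big_split; apply: eq_bigr => j _ /=.
  rewrite !mxE; case: eqP => [<-|_]; first by rewrite ltn_eqF //=; ring.
  by rewrite add0r; case: ifP; rewrite ?mul1r ?mul0r ?mulr0.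
have diag_le : \sum_(i < r) - gam i * x i 0 ^+ 2 <= - g0 * enorm x ^+ 2.
  rewrite enorm_sqr mulr_sumr; apply: ler_sum => i _.
  by rewrite !mulNr lerN2 ler_wpM2r ?sqr_ge0.
have := superdiag_quad_le x; lra.
Qed.

Lemma Agam_unitmx : (forall i, 0 < gam i) -> Agam gam \in unitmx.
Proof.
move=> gam_gt0; rewrite unitmxE -det_tr det_trig.
  rewrite unitfE; apply/prodf_neq0 => i _.
  by rewrite !mxE eqxx oppr_eq0 gt_eqF.
apply/is_trig_mxP => i j ij; rewrite !mxE.
rewrite ifF; last by apply/negP => /eqP ji; move: ij; rewrite ji ltnn.
by rewrite ifF // ltn_eqF // ltnW.
Qed.

Lemma Agam_Gam : (forall i, 0 < gam i) -> Agam gam *m Gam gam = - Bvec R r.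
Proof.
by move=> gam_gt0; rewrite /Gam mulmxN mulmxA mulmxV ?mul1mx ?Agam_unitmx.
Qed.

Lemma enorm_Bvec_le1 : enorm (Bvec R r) <= 1.
Proof.
suff : enorm (Bvec R r) ^+ 2 <= 1 by have := enorm_ge0 (Bvec R r); nra.
rewrite enorm_sqr (eq_bigr (fun i : 'I_r => if i == r.-1 :> nat then 1 else 0)).
  by apply: sum_if_le => // a b /eqP ha /eqP hb; apply: val_inj; rewrite /= ha hb.
by move=> i _; rewrite mxE; case: ifP; rewrite ?expr1n ?expr0n.
Qed.

(* Testing [A_gam Gam = - B] against [Gam] gives [(g0 - 1) |Gam|^2 <= |Gam| |B|]. *)
Lemma enorm_Gam_le (g0 : R) : 1 < g0 -> (forall i, g0 <= gam i) ->
  enorm (Gam gam) <= (g0 - 1)^-1.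
Proof.
move=> g0_gt1 gam_ge.
have gam_gt0 i : 0 < gam i by apply: lt_le_trans (gam_ge i); lra.
have quad := Agam_quad_le (Gam gam) gam_ge.
rewrite Agam_Gam // -scaleN1r edotZr in quad.
have CS := edot_le_enormM (Gam gam) (Bvec R r).
have B_le1 := enorm_Bvec_le1; have G_ge0 := enorm_ge0 (Gam gam).
have B_ge0 := enorm_ge0 (Bvec R r).
rewrite -(ler_pM2l (_ : 0 < g0 - 1)) ?subr_gt0 // mulrV ?unitf_gt0 ?subr_gt0 //.
nra.
Qed.

End CascadeMatrix.

Lemma is_derive_expR_scale (R : realType) (c t : R) :
  is_derive t 1 (fun s : R => expR (c * s)) (expR (c * t) * c).
Proof.
have lin : is_derive t 1 (fun s : R => c * s) c.
  by have := is_deriveZ c (is_derive_id t 1); rewrite [c%:A]mulr1.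
exact: (@is_derive1_comp R expR (fun s => c * s) t (expR (c * t)) c).
Qed.

(* Gronwall: [expR (eps s) * W s] has a nonpositive derivative on [(0, +oo)]. *)
Lemma expR_scale_le_of_derive1_le (R : realType) (W : R -> R) (eps : R) :
  (forall t, 0 < t -> derivable W t 1 /\ derive1 W t <= - eps * W t) ->
  W t @[t --> 0^'+] --> W 0 ->
  forall t, 0 <= t -> expR (eps * t) * W t <= W 0.
Proof.
move=> W_decay W_cvg0 t t_ge0.
pose U s := expR (eps * s) * W s.
have U_derive (s : R) : 0 < s -> is_derive s 1 U
    (expR (eps * s) * derive1 W s + W s * (expR (eps * s) * eps)).
  move=> s_gt0; have [W_der _] := W_decay s s_gt0.
  apply: (is_deriveM (is_derive_expR_scale eps s)).
  by rewrite derive1E; exact: derivableP.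
suff : U t <= U 0 by rewrite /U mulr0 expR0 mul1r.
apply: (@ler0_derive1_nincry R U 0) => //.
- by move=> s; rewrite in_itv /= andbT => /U_derive [].
- move=> s; rewrite in_itv /= andbT => s_gt0.
  rewrite derive1E (derive_val (is_derive := U_derive s s_gt0)).
  have [_ W'_le] := W_decay s s_gt0; have := expR_gt0 (eps * s); nra.
- apply/continuous_within_itvcyP; split.
    move=> s; rewrite in_itv /= andbT => /U_derive [U_der _].
    exact/differentiable_continuous/derivable1_diffP.
  apply: cvgM => //; apply: cvg_within_filter.
  apply: continuous_comp; last exact: continuous_expR.
  by apply: cvgMr; exact: cvg_id.
Qed.

Lemma is_derive_comp_diff (R : realType) (m : nat) (V : 'cV[R]_m -> R)
    (x : R -> 'cV[R]_m) (t : R) :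
  differentiable V (x t) -> derivable x t 1 ->
  is_derive t 1 (V \o x) ('d V (x t) ('D_1 x t)).
Proof.
move=> V_diff /derivable1_diffP x_diff.
have Vx_diff : differentiable (V \o x) t by exact: differentiable_comp.
apply: DeriveDef; first exact/derivable1_diffP.
by rewrite deriveE // diff_comp // [in RHS]deriveE.
Qed.

Lemma is_derive_enorm_sqr (R : realType) (m : nat) (x : R -> 'cV[R]_m) (t : R) :
  derivable x t 1 ->
  is_derive t 1 (fun s => enorm (x s) ^+ 2) (2 * edot (x t) ('D_1 x t)).
Proof.
move=> x_der.
have coord_der i : is_derive t 1 (fun s => x s i 0) ('D_1 x t i 0).
  rewrite derive_mx // mxE; apply: derivableP.
  by move/derivable_mxP : x_der => /(_ i 0).
have := is_derive_sum (fun i => is_deriveM (coord_der i) (coord_der i)).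
have -> : \sum_(i < m) ((fun s => x s i 0) * (fun s => x s i 0)) =
          (fun s => enorm (x s) ^+ 2).
  by apply/funext => s; rewrite fct_sumE enorm_sqr; apply: eq_bigr => i _; rewrite /= expr2.
move=> sum_der; apply: is_derive_eq sum_der _.
by rewrite /edot mulr_sumr; apply: eq_bigr => i _; rewrite -mulr2n mulr_natl.
Qed.

Lemma cvg_of_sqr_dist_decay (R : realType) (m : nat) (x : R -> 'cV[R]_m)
    (l : 'cV[R]_m) (c C eps : R) : 0 < c -> 0 < eps ->
  (forall t, 0 <= t -> (1 + eps * t) * (c * enorm (x t - l) ^+ 2) <= C) ->
  x t @[t --> +oo] --> l.
Proof.
move=> c_gt0 eps_gt0 decay; apply/cvgrPdist_lt => e e_gt0.
have ce_gt0 : 0 < c * eps * e ^+ 2 by rewrite !mulr_gt0 // exprn_gt0.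
have C_ge0 : 0 <= C.
  apply: le_trans (decay 0 (lexx 0)).
  by rewrite mulr0 addr0 mul1r mulr_ge0 ?sqr_ge0 ?ltW.
near=> s.
have s_gt : C / (c * eps * e ^+ 2) < s by near: s; apply: nbhs_pinfty_gt; rewrite num_real.
have s_ge0 : 0 <= s by exact/ltW/(le_lt_trans _ s_gt)/divr_ge0/ltW.
move: s_gt; rewrite ltr_pdivrMr // => s_gt.
have := decay s s_ge0; set z := enorm (x s - l) => zs_le.
have z_ge0 : 0 <= z := enorm_ge0 _.
have : c * z ^+ 2 * (1 + eps * s) < c * e ^+ 2 * (1 + eps * s).
  have : c * e ^+ 2 * (eps * s) <= c * e ^+ 2 * (1 + eps * s).
    by rewrite ler_wpM2l ?mulr_ge0 ?sqr_ge0 ?ltW //; lra.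
  nra.
rewrite ltr_pM2r; last by have := mulr_ge0 (ltW eps_gt0) s_ge0; lra.
rewrite ltr_pM2l // => z_lt.
apply: le_lt_trans (mx_norm_le_enorm _) _.
by rewrite -opprB enormN -/z -(ltr_pXn2r (n := 2)) // ?nnegrE ?ltW.
Unshelve. all: by end_near.
Qed.

Definition rate_threshold (R : realType) (a3 a4 lphi lkap : R) : R :=
  a4 + (2 * a3 * lphi * lkap + (a3 * lphi + 2 * lkap) ^+ 2) / a4.

Lemma rate_threshold_ge (R : realType) (a3 a4 lphi lkap : R) :
  0 < a3 -> 0 < a4 -> 0 <= lphi -> 0 <= lkap ->
  let K := rate_threshold a3 a4 lphi lkap in
  [/\ a4 <= K, 2 * a3 * lphi * lkap <= a4 * K & (a3 * lphi + 2 * lkap) ^+ 2 <= a4 * K].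
Proof.
move=> a3_gt0 a4_gt0 lphi_ge0 lkap_ge0 K.
have cross_ge0 : 0 <= 2 * a3 * lphi * lkap by rewrite !mulr_ge0 // ltW.
have a4K : a4 * K = a4 ^+ 2 + 2 * a3 * lphi * lkap + (a3 * lphi + 2 * lkap) ^+ 2.
  by rewrite /K /rate_threshold; field; rewrite gt_eqF.
have c_ge0 := sqr_ge0 (a3 * lphi + 2 * lkap); have := sqr_ge0 a4.
split; [|nra|nra].
by rewrite /K /rate_threshold lerDl; apply: divr_ge0 (ltW a4_gt0); exact: addr_ge0.
Qed.

Lemma rate_threshold_gt0 (R : realType) (a3 a4 lphi lkap : R) :
  0 < a3 -> 0 < a4 -> 0 <= lphi -> 0 <= lkap -> 0 < rate_threshold a3 a4 lphi lkap.
Proof.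
move=> a3_gt0 a4_gt0 lphi_ge0 lkap_ge0.
have [a4_le _ _] := rate_threshold_ge a3_gt0 a4_gt0 lphi_ge0 lkap_ge0.
exact: lt_le_trans a4_le.
Qed.

(* The cross terms are absorbed by [a4 x^2 / 4] and by half of the [- 2 K y^2] term. *)
Lemma rate_threshold_decay (R : realType) (a3 a4 lphi lkap G x y : R) :
  0 < a3 -> 0 < a4 -> 0 <= lphi -> 0 <= lkap -> 0 <= x -> 0 <= y -> 0 <= G ->
  G * rate_threshold a3 a4 lphi lkap <= 1 ->
  - a4 * x ^+ 2 + a3 * x * (lphi * (y + lkap * G * x))
    + 2 * (- rate_threshold a3 a4 lphi lkap * y ^+ 2 + lkap * x * y)
  <= - (a4 / 4) * (x ^+ 2 + y ^+ 2).
Proof.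
move=> a3_gt0 a4_gt0 lphi_ge0 lkap_ge0 x_ge0 y_ge0 G_ge0 GK_le1.
have [a4_le K_cross K_c] := rate_threshold_ge a3_gt0 a4_gt0 lphi_ge0 lkap_ge0.
set K := rate_threshold _ _ _ _ in GK_le1 a4_le K_cross K_c *.
set c := a3 * lphi + 2 * lkap in K_c.
have drift_le : a3 * lphi * lkap * G <= a4 / 2.
  have : 2 * a3 * lphi * lkap * G <= a4 * K * G by rewrite ler_wpM2r.
  nra.
have amgm : c * x * y <= a4 / 4 * x ^+ 2 + K * y ^+ 2.
  rewrite -(ler_pM2l a4_gt0).
  have := sqr_ge0 (a4 / 2 * x - c * y); have := sqr_ge0 y; nra.
have := sqr_ge0 x; have := sqr_ge0 y.
have : a3 * lphi * lkap * G * x ^+ 2 <= a4 / 2 * x ^+ 2 by rewrite ler_wpM2r ?sqr_ge0.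
rewrite /c in amgm; nra.
Qed.

Section ClosedLoop.
Variables (R : realType) (m r : nat) (a1 a2 a3 a4 lphi lkap : R).
Hypotheses (a1_gt0 : 0 < a1) (a2_gt0 : 0 < a2) (a3_gt0 : 0 < a3) (a4_gt0 : 0 < a4).
Hypotheses (lphi_ge0 : 0 <= lphi) (lkap_ge0 : 0 <= lkap).
Variables (gam : 'I_r -> R) (q : 'cV[R]_m -> 'cV[R]_r -> 'cV[R]_m).
Variables (kap V : 'cV[R]_m -> R) (gV : 'cV[R]_m -> 'cV[R]_m) (eta_e : 'cV[R]_m).

Let K := rate_threshold a3 a4 lphi lkap.
Let phi_e := kap eta_e *: Gam gam.
Let eps := a4 / (4 * (a2 + 1)).
Let K_gt0 : 0 < K := rate_threshold_gt0 a3_gt0 a4_gt0 lphi_ge0 lkap_ge0.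

Hypothesis gam_ge : forall i, K + 1 <= gam i.
Hypothesis q_lipschitz : forall e p1 p2, enorm (q e p1 - q e p2) <= lphi * enorm (p1 - p2).
Hypothesis kap_lipschitz : forall e1 e2, `|kap e1 - kap e2| <= lkap * enorm (e1 - e2).
Hypothesis V_diff : forall e, differentiable V e.
Hypothesis dV_gV : forall e w, 'd V e w = edot (gV e) w.
Hypothesis V_ge : forall e, a1 * enorm (e - eta_e) ^+ 2 <= V e.
Hypothesis V_le : forall e, V e <= a2 * enorm (e - eta_e) ^+ 2.
Hypothesis gV_le : forall e, enorm (gV e) <= a3 * enorm (e - eta_e).
Hypothesis V_decr :
  forall e, edot (gV e) (q e (kap e *: Gam gam)) <= - a4 * enorm (e - eta_e) ^+ 2.

Lemma enorm_Gam_K_le1 : enorm (Gam gam) * K <= 1.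
Proof.
have K1_gt1 : 1 < K + 1 by rewrite ltrDr K_gt0.
have := enorm_Gam_le K1_gt1 gam_ge; rewrite addrK.
by rewrite -ler_pdivlMr ?K_gt0 // div1r.
Qed.

Lemma eps_gt0 : 0 < eps.
Proof. by rewrite divr_gt0 // mulr_gt0 // ltr_wpDl // ltW. Qed.

Lemma V_ge0 e : 0 <= V e.
Proof. by apply: le_trans (V_ge e); rewrite mulr_ge0 ?sqr_ge0 ?ltW. Qed.

Lemma V_drift_le e p :
  edot (gV e) (q e p) <= - a4 * enorm (e - eta_e) ^+ 2
    + a3 * enorm (e - eta_e) * (lphi * (enorm (p - phi_e)
       + lkap * enorm (Gam gam) * enorm (e - eta_e))).
Proof.
set p_kap := kap e *: Gam gam.
rewrite -(subrK (q e p_kap) (q e p)) addrC edotDr; apply: lerD; first exact: V_decr.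
apply: le_trans (edot_le_enormM _ _) _.
apply: ler_pM; [exact: enorm_ge0 | exact: enorm_ge0 | exact: gV_le |].
apply: le_trans (q_lipschitz _ _ _) _; apply: ler_wpM2l => //.
have -> : p - p_kap = (p - phi_e) + (kap eta_e - kap e) *: Gam gam.
  by rewrite /p_kap /phi_e scalerBl addrA subrK.
apply: le_trans (enormD _ _) _; rewrite lerD2l enormZ mulrAC.
by apply: ler_wpM2r; rewrite ?enorm_ge0 // distrC.
Qed.

Lemma phi_drift_le e p :
  edot (p - phi_e) (Agam gam *m p + kap e *: Bvec R r)
    <= - K * enorm (p - phi_e) ^+ 2 + lkap * enorm (e - eta_e) * enorm (p - phi_e).
Proof.
have gam_gt0 i : 0 < gam i by apply: lt_le_trans (gam_ge i); have := K_gt0; lra.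
have -> : Agam gam *m p + kap e *: Bvec R r =
    Agam gam *m (p - phi_e) + (kap e - kap eta_e) *: Bvec R r.
  rewrite mulmxBr /phi_e -scalemxAr Agam_Gam // scalerN opprK scalerBl.
  by rewrite addrACA subrr addr0.
rewrite edotDr; apply: lerD.
  by have := Agam_quad_le (p - phi_e) gam_ge; rewrite addrK.
rewrite edotZr; apply: le_trans (ler_norm _) _; rewrite normrM.
apply: ler_pM; [exact: normr_ge0 | exact: normr_ge0 | exact: kap_lipschitz |].
apply: le_trans (ler_norm_edot _ _) _.
by rewrite -[leRHS]mulr1 ler_wpM2l ?enorm_ge0 ?enorm_Bvec_le1.
Qed.

Lemma lyap_drift_le e p :
  edot (gV e) (q e p) + 2 * edot (p - phi_e) (Agam gam *m p + kap e *: Bvec R r)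
    <= - eps * (V e + enorm (p - phi_e) ^+ 2).
Proof.
set x := enorm (e - eta_e); set y := enorm (p - phi_e).
have x_ge0 : 0 <= x := enorm_ge0 _; have y_ge0 : 0 <= y := enorm_ge0 _.
apply: le_trans (_ : - (a4 / 4) * (x ^+ 2 + y ^+ 2) <= _).
  apply: le_trans (rate_threshold_decay a3_gt0 a4_gt0 lphi_ge0 lkap_ge0 x_ge0 y_ge0
    (enorm_ge0 _) enorm_Gam_K_le1).
  by apply: lerD; [exact: V_drift_le | rewrite ler_pM2l // phi_drift_le].
have lyap_le : V e + y ^+ 2 <= (a2 + 1) * (x ^+ 2 + y ^+ 2).
  have := V_le e; rewrite -/x => Ve_le.
  have := mulr_ge0 (ltW a2_gt0) (sqr_ge0 y); have := sqr_ge0 x; lra.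
have a21_gt0 : 0 < a2 + 1 by rewrite ltr_wpDl ?ltW.
rewrite !mulNr lerN2.
have -> : eps * (V e + y ^+ 2) = a4 / 4 * ((V e + y ^+ 2) / (a2 + 1)).
  by rewrite /eps; field; rewrite gt_eqF.
apply: ler_wpM2l; first by rewrite divr_ge0 ?ltW.
by rewrite ler_pdivrMr // mulrC.
Qed.

Variables (phi : R -> 'cV[R]_r) (eta : R -> 'cV[R]_m).
Hypothesis traj_cont :
  {within [set t : R | 0 <= t], continuous (fun t => (phi t, eta t))}.
Hypothesis phi_ode : forall t, 0 < t ->
  derivable phi t 1 /\ derive1 phi t = Agam gam *m phi t + kap (eta t) *: Bvec R r.
Hypothesis eta_ode : forall t, 0 < t ->
  derivable eta t 1 /\ derive1 eta t = q (eta t) (phi t).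

Let W t := V (eta t) + enorm (phi t - phi_e) ^+ 2.

Lemma lyap_derive1_le t : 0 < t -> derivable W t 1 /\ derive1 W t <= - eps * W t.
Proof.
move=> t_gt0; have [phi_der phi'] := phi_ode t_gt0; have [eta_der eta'] := eta_ode t_gt0.
have psi_der : is_derive t 1 (fun s => phi s - phi_e) ('D_1 phi t).
  by have := is_deriveB (derivableP phi_der) (is_derive_cst phi_e t 1); rewrite subr0.
have W_der := is_deriveD (is_derive_comp_diff (V_diff (eta t)) eta_der)
  (is_derive_enorm_sqr (ex_derive (is_derive := psi_der))).
split; first exact: (ex_derive (is_derive := W_der)).
rewrite derive1E (derive_val (is_derive := W_der)) dV_gV.
rewrite (derive_val (is_derive := psi_der)) -!derive1E eta' phi'.
exact: lyap_drift_le.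
Qed.

Lemma lyap_cvg0 : W t @[t --> 0^'+] --> W 0.
Proof.
have traj_cvg : (fun t => (phi t, eta t)) @ 0^'+ --> (phi 0, eta 0).
  apply: cvg_trans ((subspace_continuousP _ _).1 traj_cont 0 (lexx 0)).
  by apply: cvg_app; apply: within_subset => s /ltW.
have eta_cvg0 : eta t @[t --> 0^'+] --> eta 0 by exact: (cvg_comp _ _ traj_cvg cvg_snd).
have phi_cvg0 : phi t @[t --> 0^'+] --> phi 0 by exact: (cvg_comp _ _ traj_cvg cvg_fst).
apply: cvgD.
  exact: (cvg_comp _ _ eta_cvg0 (differentiable_continuous (V_diff (eta 0)))).
exact: (cvg_comp _ _ phi_cvg0 (@continuous_enorm_sqr R r phi_e (phi 0))).
Qed.

Lemma lyap_le_init t : 0 <= t -> (1 + eps * t) * W t <= W 0.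
Proof.
move=> t_ge0; apply: le_trans (expR_scale_le_of_derive1_le lyap_derive1_le lyap_cvg0 t_ge0).
by apply: ler_wpM2r; [exact: addr_ge0 (V_ge0 _) (sqr_ge0 _) | exact: expR_ge1Dx].
Qed.

Lemma phi_cvg : phi t @[t --> +oo] --> phi_e.
Proof.
apply: (@cvg_of_sqr_dist_decay _ _ _ _ 1 (W 0) eps ltr01 eps_gt0) => t t_ge0.
apply: le_trans (lyap_le_init t_ge0); rewrite mul1r; apply: ler_wpM2l.
  by have := mulr_ge0 (ltW eps_gt0) t_ge0; lra.
by rewrite /W lerDr V_ge0.
Qed.

Lemma eta_cvg : eta t @[t --> +oo] --> eta_e.
Proof.
apply: (@cvg_of_sqr_dist_decay _ _ _ _ a1 (W 0) eps a1_gt0 eps_gt0) => t t_ge0.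
apply: le_trans (lyap_le_init t_ge0); apply: ler_wpM2l.
  by have := mulr_ge0 (ltW eps_gt0) t_ge0; lra.
by rewrite /W (le_trans (V_ge _)) // lerDl sqr_ge0.
Qed.

Lemma trajectory_bounded :
  exists M, forall t, 0 <= t -> enorm (phi t) + enorm (eta t) <= M.
Proof.
exists (2 + W 0 / a1 + W 0 + enorm phi_e + enorm eta_e) => t t_ge0.
have W_le : V (eta t) + enorm (phi t - phi_e) ^+ 2 <= W 0.
  apply: le_trans (lyap_le_init t_ge0); rewrite ler_peMl ?addr_ge0 ?V_ge0 ?sqr_ge0 //.
  by have := mulr_ge0 (ltW eps_gt0) t_ge0; lra.
have phi_le : enorm (phi t) <= enorm (phi t - phi_e) + enorm phi_e.
  by rewrite -{1}(subrK phi_e (phi t)) enormD.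
have eta_le : enorm (eta t) <= enorm (eta t - eta_e) + enorm eta_e.
  by rewrite -{1}(subrK eta_e (eta t)) enormD.
have := V_ge (eta t); move: W_le phi_le eta_le.
set x := enorm (eta t - eta_e); set y := enorm (phi t - phi_e) => W_le phi_le eta_le V_ge_t.
have x_ge0 : 0 <= x := enorm_ge0 _; have y_ge0 : 0 <= y := enorm_ge0 _.
have x_le : x ^+ 2 <= W 0 / a1.
  by rewrite ler_pdivlMr // mulrC; have := sqr_ge0 y; lra.
have y_le : y ^+ 2 <= W 0 by have := mulr_ge0 (ltW a1_gt0) (sqr_ge0 x); lra.
have : x <= 1 + x ^+ 2 by nra.
have : y <= 1 + y ^+ 2 by nra.
lra.
Qed.

Lemma closed_loop_stable :
  [/\ phi t @[t --> +oo] --> phi_e, eta t @[t --> +oo] --> eta_e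
    & exists M, forall t, 0 <= t -> enorm (phi t) + enorm (eta t) <= M].
Proof. by split; [exact: phi_cvg | exact: eta_cvg | exact: trajectory_bounded]. Qed.

End ClosedLoop.

Theorem theorem6 (R : realType) (n r : nat) (a1 a2 a3 a4 lphi Leta lkap : R) :
  (0 < r)%N -> (r < n)%N ->
  0 < a1 -> 0 < a2 -> 0 < a3 -> 0 < a4 -> 0 <= lphi -> 0 <= Leta -> 0 <= lkap ->
  (a3 * lphi / 2) ^+ 2 < a4 ->
  exists gam0 : R, 0 < gam0 /\
  forall (gam : 'I_r -> R), (forall i, gam0 <= gam i) ->
  forall (q : 'cV[R]_(n - r) -> 'cV[R]_r -> 'cV[R]_(n - r))
         (kap : 'cV[R]_(n - r) -> R) (V : 'cV[R]_(n - r) -> R)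
         (gV : 'cV[R]_(n - r) -> 'cV[R]_(n - r)) (eta_e : 'cV[R]_(n - r)),
  (* q_cbf Lipschitz in eta (constant Leta) and in phi (constant lphi) *)
  (forall e1 e2 p, enorm (q e1 p - q e2 p) <= Leta * enorm (e1 - e2)) ->
  (forall e p1 p2, enorm (q e p1 - q e p2) <= lphi * enorm (p1 - p2)) ->
  (* kappa_ps Lipschitz, nonnegative *)
  (forall e1 e2, `|kap e1 - kap e2| <= lkap * enorm (e1 - e2)) ->
  (forall e, 0 <= kap e) ->
  (* eta_e is an equilibrium of eta' = q(eta, Gamma kappa(eta)) *)
  q eta_e (kap eta_e *: Gam gam) = 0 ->
  (* Lyapunov function V with gradient gV *)
  (forall e, differentiable V e) ->
  (forall e w, 'd V e w = edot (gV e) w) ->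
  (forall e, a1 * enorm (e - eta_e) ^+ 2 <= V e) ->
  (forall e, V e <= a2 * enorm (e - eta_e) ^+ 2) ->
  (forall e, enorm (gV e) <= a3 * enorm (e - eta_e)) ->
  (forall e, edot (gV e) (q e (kap e *: Gam gam)) <= - a4 * enorm (e - eta_e) ^+ 2) ->
  (* any solution of the closed loop with mu(t) = kappa(eta(t)), phi(0) in S_phi *)
  forall (phi : R -> 'cV[R]_r) (eta : R -> 'cV[R]_(n - r)),
  (forall i, 0 <= phi 0 i 0) ->
  {within [set t : R | 0 <= t], continuous (fun t => (phi t, eta t))} ->
  (forall t, 0 < t -> derivable phi t 1 /\
     derive1 phi t = Agam gam *m phi t + kap (eta t) *: Bvec R r) ->
  (forall t, 0 < t -> derivable eta t 1 /\ derive1 eta t = q (eta t) (phi t)) ->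
  (phi t @[t --> +oo] --> kap eta_e *: Gam gam) /\
  (eta t @[t --> +oo] --> eta_e) /\
  (exists M : R, forall t, 0 <= t -> enorm (phi t) + enorm (eta t) <= M).
Proof.
move=> _ _ a1_gt0 a2_gt0 a3_gt0 a4_gt0 lphi_ge0 _ lkap_ge0 _.
have K_gt0 := rate_threshold_gt0 a3_gt0 a4_gt0 lphi_ge0 lkap_ge0.
exists (rate_threshold a3 a4 lphi lkap + 1); split; first by rewrite ltr_wpDl // ltW.
(* Neither the equilibrium property, nor the Lipschitz bound in [eta], nor the
   signs of [kap] and [phi 0] enter the Lyapunov estimate. *)
move=> gam gam_ge q kap V gV eta_e _ q_lip kap_lip _ _ V_diff dV_gV V_ge V_le gV_le V_decr
  phi eta _ traj_cont phi_ode eta_ode.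
by case: (closed_loop_stable a1_gt0 a2_gt0 a3_gt0 a4_gt0 lphi_ge0 lkap_ge0 gam_ge
  q_lip kap_lip V_diff dV_gV V_ge V_le gV_le V_decr traj_cont phi_ode eta_ode).
Qed.
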